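(* Let $\mathfrak{g}$ be a finite-dimensional real Lie algebra and let $((\Lambda^3\mathfrak{g})^{\mathfrak{g}})^\circ\subset(\Lambda^3\mathfrak{g})^*$ be the annihilator of $(\Lambda^3\mathfrak{g})^{\mathfrak{g}}$. The functions $f_\upsilon:r\in\Lambda^2\mathfrak{g}\mapsto\upsilon([r,r])\in\mathbb{R}$, $\upsilon\in((\Lambda^3\mathfrak{g})^{\mathfrak{g}})^\circ$, span a linear Darboux family for $V_{\mathfrak{g}}$ on $\Lambda^2\mathfrak{g}$ whose locus is the set $\mathcal{Y}_{\mathfrak{g}}$ of solutions of the modified classical Yang–Baxter equation. Moreover, the functions $r\mapsto\xi([r,r])$, $\xi\in(\Lambda^3\mathfrak{g})^*$ (i.e. the components of $[r,r]$ in any basis of $\Lambda^3\mathfrak{g}$), span a linear Darboux family for $V_{\mathfrak{g}}$ on $\Lambda^2\mathfrak{g}$ whose locus is the set of solutions of the classical Yang–Baxter equation $[r,r]=0$.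
   Context: $[\cdot,\cdot]$ is the algebraic Schouten bracket on $\Lambda\mathfrak{g}$. $(\Lambda^m\mathfrak{g})^{\mathfrak{g}}=\{w\in\Lambda^m\mathfrak{g}:[v,w]=0\ \forall v\in\mathfrak{g}\}$. The modified classical Yang–Baxter equation (mCYBE) for $r\in\Lambda^2\mathfrak{g}$ is $[r,r]\in(\Lambda^3\mathfrak{g})^{\mathfrak{g}}$; its solutions are called $r$-matrices and form $\mathcal{Y}_{\mathfrak{g}}$. $V_{\mathfrak{g}}$ is the Lie algebra of fundamental vector fields of the action $T\mapsto\Lambda^2T$ of $\mathrm{Aut}(\mathfrak{g})$ on $\Lambda^2\mathfrak{g}$, namely $w\mapsto(\Lambda^2d)(w)$ for $d\in\mathfrak{der}(\mathfrak{g})$, where $\Lambda^2d(a\wedge b)=da\wedge b+a\wedge db$. A Darboux family for a Lie algebra $V$ of vector fields on $M$ is a finite-dimensional space $\mathcal{A}=\langle f_1,\dots,f_s\rangle$ of smooth functions with $Xf_j=\sum_i h^i_{jX}f_i$, $h^i_{jX}\in C^\infty(M)$, for all $X\in V$; it is linear if the cofactors can be taken constant; its locus is the common zero set of its elements. *)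

From HB Require Import structures.
From mathcomp Require Import all_boot all_order all_algebra.
From mathcomp Require Import classical_sets reals topology normedtype derive.
Set Implicit Arguments. Unset Strict Implicit. Unset Printing Implicit Defensive.
Import Order.TTheory GRing.Theory Num.Theory.
Local Open Scope ring_scope.

(* Coordinates.  g is a real Lie algebra of dimension n with basis e_0..e_{n-1}
   and structure constants c : [e_i, e_j] = \sum_k c i j k e_k.
   Lambda^2 g: skew-symmetric matrices r (r = \sum_{i<j} r i j e_i /\ e_j).
   Lambda^3 g: alternating 3-tensors w (w = \sum_{i<j<k} w i j k e_i/\e_j/\e_k),
   where x/\y/\z is identified with the alternation of x(x)y(x)z. *)

Definition tensor3 (R : realType) (n : nat) := 'I_n -> 'I_n -> 'I_n -> R.

Definition is_lie_str (R : realType) (n : nat) (c : tensor3 R n) : Prop :=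
  (forall i j k, c i j k = - c j i k) /\
  (forall i j l m,
     \sum_k (c i j k * c k l m + c j l k * c k i m + c l i k * c k j m) = 0).

Definition lbr (R : realType) (n : nat) (c : tensor3 R n) (x y : 'I_n -> R)
  : 'I_n -> R := fun k => \sum_i \sum_j x i * y j * c i j k.

(* action of a linear endomorphism d (matrix: d e_j = \sum_i d i j e_i) *)
Definition mapv (R : realType) (n : nat) (d : 'M[R]_n) (x : 'I_n -> R)
  : 'I_n -> R := fun i => \sum_j d i j * x j.

Definition is_derivation (R : realType) (n : nat) (c : tensor3 R n)
  (d : 'M[R]_n) : Prop :=
  forall x y : 'I_n -> R,
    mapv d (lbr c x y) = (fun k => lbr c (mapv d x) y k + lbr c x (mapv d y) k).

Definition skew2 (R : realType) (n : nat) (r : 'M[R]_n) : Prop :=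
  forall i j, r i j = - r j i.

Definition alt3 (R : realType) (n : nat) (w : tensor3 R n) : Prop :=
  forall i j k, w i j k = - w j i k /\ w i j k = - w i k j.

(* Lambda^2 d (a /\ b) = d a /\ b + a /\ d b, on components *)
Definition wedge2_der (R : realType) (n : nat) (d r : 'M[R]_n) : 'M[R]_n :=
  \matrix_(i, j) (\sum_k d i k * r k j + \sum_k d j k * r i k).

(* Schouten bracket [r, r] for r in Lambda^2 g (components of the trivector):
   [a/\b, c/\d] = [a,c]/\b/\d - [a,d]/\b/\c - [b,c]/\a/\d + [b,d]/\a/\c gives
   [r,r] = \sum r_ab r_cd [e_a,e_c] /\ e_b /\ e_d. *)
Definition schouten_rr (R : realType) (n : nat) (c : tensor3 R n)
  (r : 'M[R]_n) : tensor3 R n :=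
  let S := fun k b e => \sum_a \sum_a' c a a' k * r a b * r a' e in
  fun i j l => 2 * (S i j l + S j l i + S l i j).

(* Schouten bracket [v, w] for v in g, w in Lambda^3 g (= ad_v extended as a
   derivation); coefficient of e_k in [v, e_i] is \sum_a v a * c a i k. *)
Definition schouten_v3 (R : realType) (n : nat) (c : tensor3 R n)
  (v : 'I_n -> R) (w : tensor3 R n) : tensor3 R n :=
  let ad := fun i k => \sum_a v a * c a i k in
  fun k j l => \sum_i ad i k * w i j l + \sum_i ad i j * w k i l
             + \sum_i ad i l * w k j i.

Definition invariant3 (R : realType) (n : nat) (c : tensor3 R n)
  (w : tensor3 R n) : Prop :=
  alt3 w /\ forall (v : 'I_n -> R) i j l, schouten_v3 c v w i j l = 0.

(* a linear form on Lambda^3 g, given by a coefficient tensor u *)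
Definition pair3 (R : realType) (n : nat) (u w : tensor3 R n) : R :=
  \sum_i \sum_j \sum_l u i j l * w i j l.

Definition in_annihilator (R : realType) (n : nat) (c : tensor3 R n)
  (u : tensor3 R n) : Prop :=
  forall w, invariant3 c w -> pair3 u w = 0.

Definition mCYBE (R : realType) (n : nat) (c : tensor3 R n) (r : 'M[R]_n)
  : Prop := skew2 r /\ invariant3 c (schouten_rr c r).
Definition CYBE (R : realType) (n : nat) (c : tensor3 R n) (r : 'M[R]_n)
  : Prop := skew2 r /\ forall i j l, schouten_rr c r i j l = 0.

(* V_g : fundamental vector fields w |-> Lambda^2 d (w), d a derivation *)
Definition Vg (R : realType) (n : nat) (c : tensor3 R n)
  (X : 'M[R]_n -> 'M[R]_n) : Prop :=
  exists d, is_derivation c d /\ X = wedge2_der d.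

(* Linear Darboux family on the manifold M = {w | D w} (a linear subspace of
   the matrix space) for a family V of vector fields: A is the span of
   finitely many functions f_0..f_{s-1} and X f_j = \sum_i h_i f_i on M with
   constant cofactors h_i; X f (w) is the derivative of f along X at w. *)
Definition linear_darboux_family (R : realType) (n : nat)
  (D : 'M[R]_n -> Prop) (V : ('M[R]_n -> 'M[R]_n) -> Prop)
  (A : ('M[R]_n -> R) -> Prop) : Prop :=
  exists (s : nat) (fs : 'I_s -> 'M[R]_n -> R),
    (forall f, A f <-> exists a : 'I_s -> R, f = fun w => \sum_i a i * fs i w) /\
    (forall X, V X -> forall j : 'I_s, exists h : 'I_s -> R,
       forall w, D w ->
         is_derive (0 : R^o) (1 : R^o) (fun t : R^o => fs j (w + t *: X w) : R^o)
                   (\sum_i h i * fs i w)).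

Definition locus (R : realType) (n : nat) (D : 'M[R]_n -> Prop)
  (A : ('M[R]_n -> R) -> Prop) (w : 'M[R]_n) : Prop :=
  D w /\ forall f, A f -> f w = 0.

Definition mcybe_family (R : realType) (n : nat) (c : tensor3 R n)
  (f : 'M[R]_n -> R) : Prop :=
  exists u, in_annihilator c u /\ f = fun r => pair3 u (schouten_rr c r).

Definition cybe_family (R : realType) (n : nat) (c : tensor3 R n)
  (f : 'M[R]_n -> R) : Prop :=
  exists u, f = fun r => pair3 u (schouten_rr c r).

From HB Require Import structures.
From mathcomp Require Import all_boot all_order all_algebra.
From mathcomp Require Import classical_sets reals topology normedtype derive.
From mathcomp Require Import ring.
Set Implicit Arguments. Unset Strict Implicit. Unset Printing Implicit Defensive.
Import Order.TTheory GRing.Theory Num.Theory.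
Local Open Scope ring_scope.

(* A matrix d acts on 3-tensors by the derivation D(d) = d(x)1(x)1 +
   1(x)d(x)1 + 1(x)1(x)d, whose transpose for the pairing is D(d^T).  In order:
   - equivariance: along the fundamental field Lambda^2 d of a derivation d,
     the derivative of [r,r] is D(d)[r,r], so that of f_u is f_(D(d^T) u);
   - D(d) preserves (Lambda^3 g)^g since [ad_v, D(d)] = D(-ad_(d v)); hence
     D(d^T) preserves its annihilator;
   - duality: (Lambda^3 g)^g is the common kernel of finitely many linear
     forms, whose span is therefore the annihilator;
   - a general criterion turns a finite span stable under all D(d^T) into a
     linear Darboux family; the theorem follows, the loci being immediate. *)

Section TensorAction.
Variables (R : comPzRingType) (n : nat).
Local Notation T3 := ('I_n -> 'I_n -> 'I_n -> R).

Lemma sum3_rot (F : 'I_n -> 'I_n -> 'I_n -> R) :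
  \sum_a \sum_b \sum_c F a b c = \sum_c \sum_a \sum_b F a b c.
Proof. under eq_bigr do rewrite exchange_big. by rewrite exchange_big. Qed.

Lemma sum4_rot (F : 'I_n -> 'I_n -> 'I_n -> 'I_n -> R) :
  \sum_a \sum_b \sum_c \sum_d F a b c d = \sum_d \sum_a \sum_b \sum_c F a b c d.
Proof. under eq_bigr do rewrite sum3_rot. by rewrite exchange_big. Qed.

Definition kdelta (a i : 'I_n) : R := (i == a)%:R.

Lemma sum_kdeltaL a (F : 'I_n -> R) : \sum_i kdelta a i * F i = F a.
Proof.
rewrite (bigD1 a) //= big1 => [|i /negbTE hi]; last by rewrite /kdelta hi mul0r.
by rewrite /kdelta eqxx mul1r addr0.
Qed.

Lemma sum_kdeltaR a (F : 'I_n -> R) : \sum_i F i * kdelta a i = F a.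
Proof. rewrite -[RHS](sum_kdeltaL a); apply: eq_bigr => i _; exact: mulrC. Qed.

Lemma sum_kdeltaM (x : R) a (F : 'I_n -> R) :
  \sum_j x * kdelta a j * F j = x * F a.
Proof. under eq_bigr do rewrite -mulrA. by rewrite -mulr_sumr sum_kdeltaL. Qed.

Definition act1 (M : 'M[R]_n) (Z : T3) : T3 :=
  fun k j l => \sum_i M k i * Z i j l.
Definition act2 (M : 'M[R]_n) (Z : T3) : T3 :=
  fun k j l => \sum_i M j i * Z k i l.
Definition act3 (M : 'M[R]_n) (Z : T3) : T3 :=
  fun k j l => \sum_i M l i * Z k j i.

Definition der3 (M : 'M[R]_n) (Z : T3) : T3 :=
  fun k j l => act1 M Z k j l + act2 M Z k j l + act3 M Z k j l.

Section SlotAlgebra.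
Variables (M N : 'M[R]_n) (k j l : 'I_n).

Lemma act1D3 (X Y W : T3) :
  act1 M (fun a b e => X a b e + Y a b e + W a b e) k j l =
  act1 M X k j l + act1 M Y k j l + act1 M W k j l.
Proof. rewrite /act1 -!big_split; apply: eq_bigr => i _ /=; ring. Qed.

Lemma act2D3 (X Y W : T3) :
  act2 M (fun a b e => X a b e + Y a b e + W a b e) k j l =
  act2 M X k j l + act2 M Y k j l + act2 M W k j l.
Proof. rewrite /act2 -!big_split; apply: eq_bigr => i _ /=; ring. Qed.

Lemma act3D3 (X Y W : T3) :
  act3 M (fun a b e => X a b e + Y a b e + W a b e) k j l =
  act3 M X k j l + act3 M Y k j l + act3 M W k j l.
Proof. rewrite /act3 -!big_split; apply: eq_bigr => i _ /=; ring. Qed.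

Lemma act12C Z : act1 M (act2 N Z) k j l = act2 N (act1 M Z) k j l.
Proof.
rewrite /act1 /act2; under eq_bigr do rewrite mulr_sumr.
under [RHS]eq_bigr do rewrite mulr_sumr.
rewrite exchange_big; apply: eq_bigr => a _; apply: eq_bigr => b _; ring.
Qed.

Lemma act13C Z : act1 M (act3 N Z) k j l = act3 N (act1 M Z) k j l.
Proof.
rewrite /act1 /act3; under eq_bigr do rewrite mulr_sumr.
under [RHS]eq_bigr do rewrite mulr_sumr.
rewrite exchange_big; apply: eq_bigr => a _; apply: eq_bigr => b _; ring.
Qed.

Lemma act23C Z : act2 M (act3 N Z) k j l = act3 N (act2 M Z) k j l.
Proof.
rewrite /act2 /act3; under eq_bigr do rewrite mulr_sumr.
under [RHS]eq_bigr do rewrite mulr_sumr.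
rewrite exchange_big; apply: eq_bigr => a _; apply: eq_bigr => b _; ring.
Qed.

Lemma act1M Z : act1 M (act1 N Z) k j l = act1 (M *m N) Z k j l.
Proof.
rewrite /act1; under eq_bigr do rewrite mulr_sumr.
rewrite exchange_big; apply: eq_bigr => m _; rewrite mxE mulr_suml.
apply: eq_bigr => i _; ring.
Qed.

Lemma act2M Z : act2 M (act2 N Z) k j l = act2 (M *m N) Z k j l.
Proof.
rewrite /act2; under eq_bigr do rewrite mulr_sumr.
rewrite exchange_big; apply: eq_bigr => m _; rewrite mxE mulr_suml.
apply: eq_bigr => i _; ring.
Qed.

Lemma act3M Z : act3 M (act3 N Z) k j l = act3 (M *m N) Z k j l.
Proof.
rewrite /act3; under eq_bigr do rewrite mulr_sumr.
rewrite exchange_big; apply: eq_bigr => m _; rewrite mxE mulr_suml.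
apply: eq_bigr => i _; ring.
Qed.

Lemma act1B Z : act1 (M - N) Z k j l = act1 M Z k j l - act1 N Z k j l.
Proof. rewrite /act1 -sumrB; apply: eq_bigr => i _; rewrite !mxE; ring. Qed.

Lemma act2B Z : act2 (M - N) Z k j l = act2 M Z k j l - act2 N Z k j l.
Proof. rewrite /act2 -sumrB; apply: eq_bigr => i _; rewrite !mxE; ring. Qed.

Lemma act3B Z : act3 (M - N) Z k j l = act3 M Z k j l - act3 N Z k j l.
Proof. rewrite /act3 -sumrB; apply: eq_bigr => i _; rewrite !mxE; ring. Qed.

End SlotAlgebra.

Lemma der3_comm M N Z k j l :
  der3 M (der3 N Z) k j l =
  der3 N (der3 M Z) k j l + der3 (M *m N - N *m M) Z k j l.
Proof.
rewrite /der3 !act1D3 !act2D3 !act3D3 !act12C !act13C !act23C.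
rewrite !act1M !act2M !act3M !act1B !act2B !act3B; ring.
Qed.

Lemma der3N M Z k j l : der3 (- M) Z k j l = - der3 M Z k j l.
Proof.
rewrite /der3 /act1 /act2 /act3 !opprD -!sumrN.
by congr (_ + _ + _); apply: eq_bigr => i _; rewrite mxE mulNr.
Qed.

Lemma der3_eq0 M (Z : T3) k j l :
  (forall a b e, Z a b e = 0) -> der3 M Z k j l = 0.
Proof.
move=> Z0; rewrite /der3 /act1 /act2 /act3 !big1 ?addr0 // => i _;
  by rewrite Z0 mulr0.
Qed.

Lemma der3_cyclic M (Z : T3) k j l :
  der3 M (fun i j l => 2 * (Z i j l + Z j l i + Z l i j)) k j l =
  2 * (der3 M Z k j l + der3 M Z j l k + der3 M Z l k j).
Proof.
have E (x f g h : 'I_n -> R) : \sum_i x i * (2 * (f i + g i + h i)) =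
    2 * (\sum_i x i * f i + \sum_i x i * g i + \sum_i x i * h i).
  rewrite -!big_split mulr_sumr; apply: eq_bigr => i _ /=; ring.
rewrite /der3 /act1 /act2 /act3 !E; ring.
Qed.

End TensorAction.

Arguments kdelta {R n} a i.

Section Pairing.
Variables (R : realType) (n : nat).
Local Notation T3 := (tensor3 R n).

Lemma pair3D3r u (Z1 Z2 Z3 : T3) :
  pair3 u (fun i j l => Z1 i j l + Z2 i j l + Z3 i j l) =
  pair3 u Z1 + pair3 u Z2 + pair3 u Z3.
Proof.
rewrite /pair3 -!big_split /=; apply: eq_bigr => i _.
rewrite -!big_split /=; apply: eq_bigr => j _.
rewrite -!big_split /=; apply: eq_bigr => l _; ring.
Qed.

Lemma pair3D3l (u1 u2 u3 Z : T3) :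
  pair3 (fun i j l => u1 i j l + u2 i j l + u3 i j l) Z =
  pair3 u1 Z + pair3 u2 Z + pair3 u3 Z.
Proof.
rewrite /pair3 -!big_split /=; apply: eq_bigr => i _.
rewrite -!big_split /=; apply: eq_bigr => j _.
rewrite -!big_split /=; apply: eq_bigr => l _; ring.
Qed.

Lemma pair3Dl (u1 u2 Z : T3) :
  pair3 (fun i j l => u1 i j l + u2 i j l) Z = pair3 u1 Z + pair3 u2 Z.
Proof.
rewrite /pair3 -!big_split; apply: eq_bigr => i _ /=.
rewrite -!big_split; apply: eq_bigr => j _ /=.
rewrite -!big_split; apply: eq_bigr => l _ /=; ring.
Qed.

Lemma pair3_quad u (Z Z0 Z1 Z2 : T3) (t : R) :
  (forall i j l, Z i j l = Z0 i j l + t * Z1 i j l + t ^+ 2 * Z2 i j l) ->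
  pair3 u Z = pair3 u Z0 + t * pair3 u Z1 + t ^+ 2 * pair3 u Z2.
Proof.
move=> hZ; rewrite /pair3 !mulr_sumr -!big_split; apply: eq_bigr => i _ /=.
rewrite !mulr_sumr -!big_split; apply: eq_bigr => j _ /=.
rewrite !mulr_sumr -!big_split; apply: eq_bigr => l _ /=.
rewrite hZ; ring.
Qed.

Lemma act1_adj u M (Z : T3) : pair3 u (act1 M Z) = pair3 (act1 M^T u) Z.
Proof.
rewrite /pair3 /act1.
under eq_bigr do under eq_bigr do under eq_bigr do rewrite mulr_sumr.
rewrite sum4_rot.
under [RHS]eq_bigr do under eq_bigr do under eq_bigr do rewrite mulr_suml.
under [RHS]eq_bigr do rewrite sum3_rot.
apply: eq_bigr => k _; apply: eq_bigr => i _; apply: eq_bigr => j _.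
apply: eq_bigr => l _; rewrite mxE; ring.
Qed.

Lemma act2_adj u M (Z : T3) : pair3 u (act2 M Z) = pair3 (act2 M^T u) Z.
Proof.
rewrite /pair3 /act2.
under eq_bigr do under eq_bigr do under eq_bigr do rewrite mulr_sumr.
under eq_bigr do rewrite sum3_rot.
under [RHS]eq_bigr do under eq_bigr do under eq_bigr do rewrite mulr_suml.
under eq_bigr do under eq_bigr do rewrite exchange_big.
apply: eq_bigr => k _; apply: eq_bigr => i _; apply: eq_bigr => j _.
apply: eq_bigr => l _; rewrite mxE; ring.
Qed.

Lemma act3_adj u M (Z : T3) : pair3 u (act3 M Z) = pair3 (act3 M^T u) Z.
Proof.
rewrite /pair3 /act3.
under eq_bigr do under eq_bigr do under eq_bigr do rewrite mulr_sumr.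
under [RHS]eq_bigr do under eq_bigr do under eq_bigr do rewrite mulr_suml.
under eq_bigr do under eq_bigr do rewrite exchange_big.
apply: eq_bigr => k _; apply: eq_bigr => i _; apply: eq_bigr => j _.
apply: eq_bigr => l _; rewrite mxE; ring.
Qed.

Lemma der3_adj u M (Z : T3) : pair3 u (der3 M Z) = pair3 (der3 M^T u) Z.
Proof. by rewrite /der3 pair3D3r pair3D3l act1_adj act2_adj act3_adj. Qed.

Definition lincomb s (a : 'I_s -> R) (b : 'I_s -> T3) : T3 :=
  fun x y z => \sum_i a i * b i x y z.

Lemma pair3_lincomb s (a : 'I_s -> R) b (w : T3) :
  pair3 (lincomb a b) w = \sum_i a i * pair3 (b i) w.
Proof.
rewrite /pair3 /lincomb.
under eq_bigr do under eq_bigr do under eq_bigr do rewrite mulr_suml.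
under eq_bigr do under eq_bigr do rewrite exchange_big.
under eq_bigr do rewrite exchange_big.
rewrite exchange_big.
under [RHS]eq_bigr do rewrite mulr_sumr.
under [RHS]eq_bigr do under eq_bigr do rewrite mulr_sumr.
under [RHS]eq_bigr do under eq_bigr do under eq_bigr do rewrite mulr_sumr.
apply: eq_bigr => i _; apply: eq_bigr => x _; apply: eq_bigr => y _.
apply: eq_bigr => z _; ring.
Qed.

Lemma lincomb_delta s (b : 'I_s -> T3) j :
  b j = lincomb (fun i => (i == j)%:R) b.
Proof.
apply: boolp.funext => x; apply: boolp.funext => y; apply: boolp.funext => z.
rewrite /lincomb (bigD1 j) //= big1 => [|i /negbTE hi];
  last by rewrite hi mul0r.
by rewrite eqxx mul1r addr0.
Qed.

Definition unit3 (i j l : 'I_n) : T3 :=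
  fun x y z => kdelta i x * kdelta j y * kdelta l z.

Lemma pair3_unit3 i j l (w : T3) : pair3 (unit3 i j l) w = w i j l.
Proof.
rewrite /pair3 /unit3.
under eq_bigr do under eq_bigr do rewrite sum_kdeltaM.
under eq_bigr do rewrite sum_kdeltaM.
by rewrite sum_kdeltaL.
Qed.

End Pairing.

Arguments unit3 {R n} i j l.

Section Equivariance.
Variables (R : realType) (n : nat) (c : tensor3 R n).
Local Notation T3 := (tensor3 R n).

Lemma derivation_coords d : is_derivation c d ->
  forall a b m, \sum_k d m k * c a b k =
     \sum_i d i a * c i b m + \sum_j d j b * c a j m.
Proof.
move=> hd a b m.
have sum2_kdelta (F : 'I_n -> 'I_n -> R) :
    \sum_i \sum_j kdelta a i * kdelta b j * F i j = F a b.
  under eq_bigr do rewrite sum_kdeltaM.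
  by rewrite sum_kdeltaL.
move: (congr1 (fun f => f m) (hd (kdelta a) (kdelta b))); rewrite /mapv /lbr /=.
under eq_bigr do rewrite sum2_kdelta.
move=> ->; congr (_ + _).
  by apply: eq_bigr => i _; rewrite sum_kdeltaR sum_kdeltaM.
under eq_bigr do under eq_bigr do rewrite sum_kdeltaR -mulrA.
under eq_bigr do rewrite -mulr_sumr.
by rewrite sum_kdeltaL.
Qed.

Lemma wedge2_derE (d r : 'M[R]_n) : wedge2_der d r = d *m r + r *m d^T.
Proof.
apply/matrixP => i j; rewrite !mxE; congr (_ + _).
by apply: eq_bigr => k _; rewrite !mxE mulrC.
Qed.

(* The bilinear map (r, s) |-> sum c_(a a')^k r^(a b) s^(a' e) e_k e_b e_e;
   [r, r] is twice the cyclic symmetrisation of bil2 r r. *)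
Definition bil2 (r s : 'M[R]_n) : T3 :=
  fun k b e => \sum_a \sum_a' c a a' k * r a b * s a' e.

Lemma bil2DL r1 r2 s k b e :
  bil2 (r1 + r2) s k b e = bil2 r1 s k b e + bil2 r2 s k b e.
Proof.
rewrite /bil2 -big_split; apply: eq_bigr => a _.
by rewrite -big_split; apply: eq_bigr => a' _ /=; rewrite mxE; ring.
Qed.

Lemma bil2DR r s1 s2 k b e :
  bil2 r (s1 + s2) k b e = bil2 r s1 k b e + bil2 r s2 k b e.
Proof.
rewrite /bil2 -big_split; apply: eq_bigr => a _.
by rewrite -big_split; apply: eq_bigr => a' _ /=; rewrite mxE; ring.
Qed.

Lemma bil2_expand r X (t : R) k b e :
  bil2 (r + t *: X) (r + t *: X) k b e =
  bil2 r r k b e + t * (bil2 X r k b e + bil2 r X k b e)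
  + t ^+ 2 * bil2 X X k b e.
Proof.
have sum2_quad (A B C D : 'I_n -> 'I_n -> R) :
  \sum_a \sum_a' (A a a' + t * (B a a' + C a a') + t ^+ 2 * D a a') =
  \sum_a \sum_a' A a a' + t * (\sum_a \sum_a' B a a' + \sum_a \sum_a' C a a')
  + t ^+ 2 * \sum_a \sum_a' D a a'.
  under eq_bigr do rewrite big_split big_split /= -!mulr_sumr big_split /=.
  by rewrite big_split big_split /= -!mulr_sumr big_split /=.
rewrite /bil2 -sum2_quad; apply: eq_bigr => a _; apply: eq_bigr => a' _.
rewrite !mxE; ring.
Qed.

Lemma bil2_mulmxTL (d : 'M[R]_n) r s k b e :
  bil2 (r *m d^T) s k b e = act2 d (bil2 r s) k b e.
Proof.
rewrite /bil2 /act2.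
under [RHS]eq_bigr do rewrite mulr_sumr.
under [RHS]eq_bigr do under eq_bigr do rewrite mulr_sumr.
rewrite sum3_rot sum3_rot; apply: eq_bigr => a _; apply: eq_bigr => a' _.
rewrite mxE mulr_sumr mulr_suml; apply: eq_bigr => m _; rewrite mxE; ring.
Qed.

Lemma bil2_mulmxTR (d : 'M[R]_n) r s k b e :
  bil2 r (s *m d^T) k b e = act3 d (bil2 r s) k b e.
Proof.
rewrite /bil2 /act3.
under [RHS]eq_bigr do rewrite mulr_sumr.
under [RHS]eq_bigr do under eq_bigr do rewrite mulr_sumr.
rewrite sum3_rot sum3_rot; apply: eq_bigr => a _; apply: eq_bigr => a' _.
rewrite mxE mulr_sumr; apply: eq_bigr => m _; rewrite mxE; ring.
Qed.

Lemma act1_bil2 d r s k b e : is_derivation c d ->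
  act1 d (bil2 r s) k b e = bil2 (d *m r) s k b e + bil2 r (d *m s) k b e.
Proof.
move=> hd.
have -> : act1 d (bil2 r s) k b e =
    \sum_a \sum_a' (\sum_i d k i * c a a' i) * (r a b * s a' e).
  rewrite /act1 /bil2; under eq_bigr do rewrite mulr_sumr.
  under eq_bigr do under eq_bigr do rewrite mulr_sumr.
  rewrite sum3_rot sum3_rot; apply: eq_bigr => a _; apply: eq_bigr => a' _.
  by rewrite mulr_suml; apply: eq_bigr => i _; ring.
under eq_bigr do under eq_bigr do rewrite derivation_coords // mulrDl.
under eq_bigr do rewrite big_split /=.
rewrite big_split /= /bil2; congr (_ + _).
  transitivity (\sum_a \sum_i \sum_a' c i a' k * (d i a * r a b) * s a' e).
    apply: eq_bigr => a _; rewrite exchange_big; apply: eq_bigr => i _.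
    rewrite mulr_suml; apply: eq_bigr => a' _; ring.
  rewrite -sum3_rot; apply: eq_bigr => i _; apply: eq_bigr => a' _.
  by rewrite mxE mulr_sumr mulr_suml.
apply: eq_bigr => a _.
transitivity (\sum_j \sum_a' c a j k * r a b * (d j a' * s a' e)).
  rewrite exchange_big; apply: eq_bigr => j _.
  rewrite mulr_suml; apply: eq_bigr => a' _; ring.
by apply: eq_bigr => j _; rewrite mxE mulr_sumr.
Qed.

Lemma der3_bil2 d r s k b e : is_derivation c d ->
  der3 d (bil2 r s) k b e =
  bil2 (wedge2_der d r) s k b e + bil2 r (wedge2_der d s) k b e.
Proof.
move=> hd; rewrite !wedge2_derE bil2DL bil2DR bil2_mulmxTL bil2_mulmxTR.
rewrite /der3 act1_bil2 //; ring.
Qed.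

(* The polarisation of [r, r]: schouten_rr c r = schouten2 r r. *)
Definition schouten2 (r s : 'M[R]_n) : T3 :=
  fun i j l => 2 * (bil2 r s i j l + bil2 r s j l i + bil2 r s l i j).

Lemma der3_schouten2 d r s i j l : is_derivation c d ->
  der3 d (schouten2 r s) i j l =
  schouten2 (wedge2_der d r) s i j l + schouten2 r (wedge2_der d s) i j l.
Proof. by move=> hd; rewrite /schouten2 der3_cyclic !der3_bil2 //; ring. Qed.

Lemma schouten2_expand r X (t : R) i j l :
  schouten2 (r + t *: X) (r + t *: X) i j l =
  schouten2 r r i j l + t * (schouten2 X r i j l + schouten2 r X i j l)
  + t ^+ 2 * schouten2 X X i j l.
Proof. by rewrite /schouten2 !bil2_expand; ring. Qed.

Lemma is_derive_quadratic (a b e : R) (f : R^o -> R^o) :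
  (forall t, f t = a + t * b + t ^+ 2 * e) -> is_derive (0 : R^o) (1 : R^o) f b.
Proof.
move=> hf.
have -> : f = horner (a%:P + b *: 'X + e *: 'X^2).
  apply: boolp.funext => t; rewrite hf !hornerE /=.
  move: (t : R) => x; rewrite expr2; ring.
have := is_derive_poly (a%:P + b *: 'X + e *: 'X^2) (0 : R).
suff -> : (poly.deriv (a%:P + b *: 'X + e *: 'X^2)).[0] = b by [].
rewrite !poly.derivE !hornerE /=; ring.
Qed.

Lemma derive_pair3_schouten d u w : is_derivation c d ->
  is_derive (0 : R^o) (1 : R^o)
    (fun t : R^o => pair3 u (schouten_rr c (w + t *: wedge2_der d w)) : R^o)
    (pair3 (der3 d^T u) (schouten_rr c w)).
Proof.
move=> hd; rewrite -der3_adj.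
apply: (@is_derive_quadratic (pair3 u (schouten_rr c w)) _
   (pair3 u (schouten_rr c (wedge2_der d w)))) => t.
apply: pair3_quad => i j l.
by rewrite [LHS]schouten2_expand der3_schouten2.
Qed.

End Equivariance.

Section Invariance.
Variables (R : realType) (n : nat) (c : tensor3 R n).
Local Notation T3 := (tensor3 R n).

Definition adm (v : 'I_n -> R) : 'M[R]_n := \matrix_(k, i) \sum_a v a * c a i k.

Lemma schouten_v3E v w k j l : schouten_v3 c v w k j l = der3 (adm v) w k j l.
Proof.
rewrite /schouten_v3 /der3 /act1 /act2 /act3.
by congr (_ + _ + _); apply: eq_bigr => i _; rewrite mxE.
Qed.

Lemma adm_derivation_comm d v : is_derivation c d ->
  adm v *m d - d *m adm v = - adm (mapv d v).
Proof.
move=> hd; apply/matrixP => k i.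
rewrite (_ : (adm v *m d - d *m adm v) k i =
   (adm v *m d) k i - (d *m adm v) k i); last by rewrite !mxE.
rewrite (_ : (- adm (mapv d v)) k i = - adm (mapv d v) k i);
  last by rewrite !mxE.
have -> : (d *m adm v) k i = \sum_a v a * \sum_m d k m * c a i m.
  rewrite mxE; under eq_bigr do rewrite mxE mulr_sumr.
  rewrite exchange_big; apply: eq_bigr => a _; rewrite mulr_sumr.
  by apply: eq_bigr => m _; ring.
have -> : (adm v *m d) k i = \sum_a v a * \sum_j d j i * c a j k.
  rewrite mxE; under eq_bigr do rewrite mxE mulr_suml.
  rewrite exchange_big; apply: eq_bigr => a _; rewrite mulr_sumr.
  by apply: eq_bigr => m _; ring.
have -> : adm (mapv d v) k i = \sum_a v a * \sum_p d p a * c p i k.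
  rewrite mxE /mapv; under eq_bigr do rewrite mulr_suml.
  rewrite exchange_big; apply: eq_bigr => a _; rewrite mulr_sumr.
  by apply: eq_bigr => m _; ring.
under [X in _ - X]eq_bigr do rewrite derivation_coords // mulrDr.
rewrite big_split /=; ring.
Qed.

Lemma alt3_der3 (d : 'M[R]_n) (w : T3) : alt3 w -> alt3 (der3 d w).
Proof.
move=> hw i j k.
have swap12 a b e : w a b e = - w b a e := proj1 (hw a b e).
have swap23 a b e : w a b e = - w a e b := proj2 (hw a b e).
have sumN (F G : 'I_n -> R) : (forall m, F m = - G m) ->
    \sum_m F m = - \sum_m G m.
  by move=> FG; rewrite -sumrN; apply: eq_bigr => m _.
rewrite /der3 /act1 /act2 /act3; split.
  rewrite (sumN (fun m => d j m * w m i k) (fun m => d j m * w i m k));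
    last by move=> m; rewrite swap12 mulrN.
  rewrite (sumN (fun m => d i m * w j m k) (fun m => d i m * w m j k));
    last by move=> m; rewrite swap12 mulrN.
  rewrite (sumN (fun m => d k m * w j i m) (fun m => d k m * w i j m));
    last by move=> m; rewrite swap12 mulrN.
  ring.
rewrite (sumN (fun m => d i m * w m k j) (fun m => d i m * w m j k));
  last by move=> m; rewrite swap23 mulrN.
rewrite (sumN (fun m => d k m * w i m j) (fun m => d k m * w i j m));
  last by move=> m; rewrite swap23 mulrN.
rewrite (sumN (fun m => d j m * w i k m) (fun m => d j m * w i m k));
  last by move=> m; rewrite swap23 mulrN.
ring.
Qed.

(* Fact 2: derivations of g preserve (Lambda^3 g)^g, since
   [v, D(d) w] = D(d) [v, w] - [d v, w]. *)
Lemma invariant3_der3 d w : is_derivation c d ->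
  invariant3 c w -> invariant3 c (der3 d w).
Proof.
move=> hd [halt hinv]; split; first exact: alt3_der3.
move=> v i j l.
rewrite schouten_v3E der3_comm adm_derivation_comm // der3N -schouten_v3E.
rewrite (@der3_eq0 _ _ d (der3 (adm v) w));
  last by move=> a b e; rewrite -schouten_v3E.
by rewrite hinv oppr0 add0r.
Qed.

(* Consequently D(d^T) = D(d)^T preserves the annihilator of (Lambda^3 g)^g. *)
Lemma annihilator_der3T d u : is_derivation c d ->
  in_annihilator c u -> in_annihilator c (der3 d^T u).
Proof.
by move=> hd hu w hw; rewrite -der3_adj; apply: hu; exact: invariant3_der3.
Qed.

End Invariance.

Lemma row_space_of_orthogonal (F : fieldType) m N (B : 'M[F]_(m, N))
    (u : 'rV[F]_N) :
  (forall w : 'rV[F]_N, w *m B^T = 0 -> u *m w^T = 0) ->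
  exists x : 'rV[F]_m, u = x *m B.
Proof.
move=> orthB.
suff: (u <= B)%MS by case/submxP => x ->; exists x.
rewrite submxE; apply/eqP/matrixP => i k.
set C := cokermx B.
have BC0 : (\row_j C j k) *m B^T = 0.
  apply/matrixP => a p.
  transitivity ((B *m C) p k); last by rewrite mulmx_coker !mxE.
  by rewrite !mxE; apply: eq_bigr => j _; rewrite !mxE mulrC.
move/(congr1 (fun A : 'M_1 => A 0 0)): (orthB _ BC0); rewrite !mxE => E.
rewrite (ord1 i) -[RHS]E.
by apply: eq_bigr => j _; rewrite !mxE.
Qed.

Section Duality.
Variables (R : realType) (n : nat).
Local Notation T3 := (tensor3 R n).

Definition triple := ('I_n * 'I_n * 'I_n)%type.
Local Notation N := #|{: triple}|.

Definition coord (u : T3) (p : triple) : R := u p.1.1 p.1.2 p.2.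
Definition vec (u : T3) : 'rV[R]_N := \row_k coord u (enum_val k).
Definition unvec (x : 'rV[R]_N) : T3 :=
  fun i j l => x 0 (enum_rank ((i, j, l) : triple)).

Lemma vec_unvec x : vec (unvec x) = x.
Proof.
apply/matrixP => i k; rewrite mxE /coord /unvec (ord1 i).
by case E: (enum_val k) => [[a b] e] /=; rewrite -E enum_valK.
Qed.

Lemma vecE u i j l : vec u 0 (enum_rank ((i, j, l) : triple)) = u i j l.
Proof. by rewrite mxE enum_rankK. Qed.

Lemma pair3_vec (u w : T3) : pair3 u w = \sum_k vec u 0 k * vec w 0 k.
Proof.
rewrite /pair3 pair_bigA /= pair_bigA /= (big_enum_val (A := {: triple})) /=.
by apply: eq_bigr => k _; rewrite !mxE.
Qed.

Lemma span_of_common_kernel s (b : 'I_s -> T3) (u : T3) :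
  (forall w, (forall m, pair3 (b m) w = 0) -> pair3 u w = 0) ->
  exists a : 'I_s -> R, u = lincomb a b.
Proof.
move=> hu.
pose B : 'M[R]_(s, N) := \matrix_(m, k) vec (b m) 0 k.
have [x hx] : exists x : 'rV[R]_s, vec u = x *m B.
  apply: row_space_of_orthogonal => w hw.
  have bw0 m : pair3 (b m) (unvec w) = 0.
    move/(congr1 (fun A : 'M_(1, s) => A 0 m)): hw; rewrite !mxE => <-.
    by rewrite pair3_vec vec_unvec; apply: eq_bigr => k _; rewrite !mxE mulrC.
  have := hu _ bw0; rewrite pair3_vec vec_unvec => uw0.
  apply/matrixP => i j; rewrite (ord1 i) (ord1 j) !mxE -[RHS]uw0.
  by apply: eq_bigr => k _; rewrite !mxE.
exists (fun m => x 0 m).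
apply: boolp.funext => i; apply: boolp.funext => j; apply: boolp.funext => l.
have := congr1 (fun A : 'rV_N => A 0 (enum_rank ((i, j, l) : triple))) hx.
rewrite vecE => ->; rewrite mxE /lincomb; apply: eq_bigr => m _.
by rewrite mxE vecE.
Qed.

Definition coord_form (k : 'I_N) : T3 :=
  unit3 (enum_val k).1.1 (enum_val k).1.2 (enum_val k).2.

Lemma coord_form_span (u : T3) : exists a : 'I_N -> R, u = lincomb a coord_form.
Proof.
apply: span_of_common_kernel => w hw.
rewrite /pair3 big1 // => i _; rewrite big1 // => j _; rewrite big1 // => l _.
have := hw (enum_rank ((i, j, l) : triple)).
by rewrite /coord_form enum_rankK pair3_unit3 => ->; rewrite mulr0.
Qed.

End Duality.

(* (Lambda^3 g)^g is the common kernel of finitely many linear forms: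
   antisymmetry in two pairs of slots and vanishing of [e_a, w]. *)
Section InvariantEquations.
Variables (R : realType) (n : nat) (c : tensor3 R n).
Local Notation T3 := (tensor3 R n).

Lemma pair3_slot1 (F : 'I_n -> R) j l (w : T3) :
  pair3 (fun x y z => F x * kdelta j y * kdelta l z) w = \sum_x F x * w x j l.
Proof.
rewrite /pair3; apply: eq_bigr => x _.
under eq_bigr do rewrite sum_kdeltaM.
by rewrite sum_kdeltaM.
Qed.

Lemma pair3_slot2 (F : 'I_n -> R) k l (w : T3) :
  pair3 (fun x y z => F y * kdelta k x * kdelta l z) w = \sum_y F y * w k y l.
Proof.
rewrite /pair3; under eq_bigr do under eq_bigr do rewrite sum_kdeltaM.
transitivity (\sum_x kdelta k x * \sum_y F y * w x y l).
  by apply: eq_bigr => x _; rewrite mulr_sumr; apply: eq_bigr => y _; ring.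
by rewrite sum_kdeltaL.
Qed.

Lemma pair3_slot3 (F : 'I_n -> R) k j (w : T3) :
  pair3 (fun x y z => F z * kdelta k x * kdelta j y) w = \sum_z F z * w k j z.
Proof.
rewrite /pair3.
transitivity (\sum_x \sum_y kdelta k x * kdelta j y * \sum_z F z * w x y z).
  apply: eq_bigr => x _; apply: eq_bigr => y _; rewrite mulr_sumr.
  by apply: eq_bigr => z _; ring.
under eq_bigr do rewrite sum_kdeltaM.
by rewrite sum_kdeltaL.
Qed.

Lemma schouten_v3_kdelta a (w : T3) k j l :
  schouten_v3 c (kdelta a) w k j l =
  \sum_i c a i k * w i j l + \sum_i c a i j * w k i l
  + \sum_i c a i l * w k j i.
Proof.
by rewrite /schouten_v3 /=; congr (_ + _ + _); apply: eq_bigr => i _;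
  rewrite sum_kdeltaL.
Qed.

Lemma schouten_v3_lin v (w : T3) k j l :
  schouten_v3 c v w k j l = \sum_a v a * schouten_v3 c (kdelta a) w k j l.
Proof.
have hlin (f : 'I_n -> 'I_n -> R) (g : 'I_n -> R) :
    \sum_i (\sum_a v a * f a i) * g i = \sum_a v a * \sum_i f a i * g i.
  under eq_bigr do rewrite mulr_suml.
  rewrite exchange_big; apply: eq_bigr => a _; rewrite mulr_sumr.
  by apply: eq_bigr => i _; ring.
under [RHS]eq_bigr do rewrite schouten_v3_kdelta.
rewrite /schouten_v3 /= !hlin -!big_split; apply: eq_bigr => a _ /=; ring.
Qed.

Definition equation := (triple n + triple n + 'I_n * triple n)%type.

Definition eqn_form (f : equation) : T3 :=
  match f with
  | inl (inl (i, j, l)) => fun x y z => unit3 i j l x y z + unit3 j i l x y z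
  | inl (inr (i, j, l)) => fun x y z => unit3 i j l x y z + unit3 i l j x y z
  | inr (a, (k, j, l)) => fun x y z =>
      c a x k * kdelta j y * kdelta l z + c a y j * kdelta k x * kdelta l z
      + c a z l * kdelta k x * kdelta j y
  end.

Lemma invariant3_eqns (w : T3) :
  invariant3 c w <-> forall f, pair3 (eqn_form f) w = 0.
Proof.
have pair3_bracket a k j l :
    pair3 (eqn_form (inr (a, (k, j, l)))) w = schouten_v3 c (kdelta a) w k j l.
  rewrite /= pair3D3l (pair3_slot1 (fun x => c a x k)).
  by rewrite (pair3_slot2 (fun y => c a y j)) (pair3_slot3 (fun z => c a z l))
    schouten_v3_kdelta.
split.
  move=> [halt hinv] [[[[i j] l]|[[i j] l]]|[a [[k j] l]]].
  - by rewrite /= pair3Dl !pair3_unit3 (proj1 (halt i j l)) addNr.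
  - by rewrite /= pair3Dl !pair3_unit3 (proj2 (halt i j l)) addNr.
  - by rewrite pair3_bracket hinv.
move=> eqns; split.
  move=> i j l; split; apply/eqP; rewrite -addr_eq0; apply/eqP.
    by have := eqns (inl (inl (i, j, l))); rewrite /= pair3Dl !pair3_unit3.
  by have := eqns (inl (inr (i, j, l))); rewrite /= pair3Dl !pair3_unit3.
move=> v k j l; rewrite schouten_v3_lin big1 // => a _.
by rewrite -pair3_bracket eqns mulr0.
Qed.

Lemma annihilator_span u :
  in_annihilator c u <->
  exists a : 'I_#|{: equation}| -> R,
    u = lincomb a (fun m => eqn_form (enum_val m)).
Proof.
split=> [hu | [a ->] w /invariant3_eqns hw].
  apply: span_of_common_kernel => w hw; apply: hu; apply/invariant3_eqns => f.
  by have := hw (enum_rank f); rewrite enum_rankK.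
by rewrite pair3_lincomb big1 // => m _; rewrite hw mulr0.
Qed.

End InvariantEquations.

Lemma linear_darboux_of_stable_span (R : realType) (n : nat) (c : tensor3 R n)
    (A : ('M[R]_n -> R) -> Prop) (P : tensor3 R n -> Prop) s
    (b : 'I_s -> tensor3 R n) :
  (forall f, A f <-> exists u, P u /\ f = fun r => pair3 u (schouten_rr c r)) ->
  (forall u, P u <-> exists a, u = lincomb a b) ->
  (forall d, is_derivation c d -> forall u, P u -> P (der3 d^T u)) ->
  linear_darboux_family (@skew2 R n) (Vg c) A.
Proof.
move=> hA hP stableP.
exists s, (fun i r => pair3 (b i) (schouten_rr c r)); split.
  move=> f; rewrite hA; split.
    move=> [u [/hP [a ->] ->]]; exists a; apply: boolp.funext => r.
    by rewrite pair3_lincomb.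
  move=> [a ->]; exists (lincomb a b); split; first by apply/hP; exists a.
  by apply: boolp.funext => r; rewrite pair3_lincomb.
move=> X [d [hd ->]] j.
have Pbj : P (b j).
  by apply/hP; exists (fun i => (i == j)%:R); exact: lincomb_delta.
have [h hh] : exists h, der3 d^T (b j) = lincomb h b.
  by apply/hP; exact: stableP _ hd _ Pbj.
exists h => w _.
by have := derive_pair3_schouten (b j) w hd; rewrite hh pair3_lincomb.
Qed.

Lemma locus_mcybe (R : realType) (n : nat) (c : tensor3 R n) r :
  locus (@skew2 R n) (mcybe_family c) r <-> mCYBE c r.
Proof.
split=> [[skew_r vanish] | [skew_r inv_rr]]; split=> //.
  apply/invariant3_eqns => f.
  apply: (vanish (fun r => pair3 (eqn_form c f) (schouten_rr c r))).
  exists (eqn_form c f); split=> // w /invariant3_eqns; exact.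
by move=> f [u [hu ->]]; exact: hu.
Qed.

Lemma locus_cybe (R : realType) (n : nat) (c : tensor3 R n) r :
  locus (@skew2 R n) (cybe_family c) r <-> CYBE c r.
Proof.
split=> [[skew_r vanish] | [skew_r rr0]]; split=> //.
  move=> i j l; have := vanish _ (ex_intro _ (unit3 i j l) erefl).
  by rewrite /= pair3_unit3.
move=> f [u ->] /=.
rewrite /pair3 big1 // => i _; rewrite big1 // => j _; rewrite big1 // => l _.
by rewrite rr0 mulr0.
Qed.

Theorem proposition5p3 (R : realType) (n : nat) (c : tensor3 R n) :
  is_lie_str c ->
  (linear_darboux_family (@skew2 R n) (Vg c) (mcybe_family c) /\
   (forall r, locus (@skew2 R n) (mcybe_family c) r <-> mCYBE c r)) /\
  (linear_darboux_family (@skew2 R n) (Vg c) (cybe_family c) /\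
   (forall r, locus (@skew2 R n) (cybe_family c) r <-> CYBE c r)).
Proof.
move=> _; split; split; [| exact: locus_mcybe | | exact: locus_cybe].
- apply: (linear_darboux_of_stable_span (P := in_annihilator c)
            (b := fun m => eqn_form c (enum_val m))) => //.
  + exact: annihilator_span.
  + by move=> d hd u; exact: annihilator_der3T.
- apply: (linear_darboux_of_stable_span (P := fun _ => True)
            (b := @coord_form R n)) => //.
  + by move=> f; split=> [[u ->] | [u [_ ->]]]; exists u.
  + by move=> u; split=> // _; exact: coord_form_span.
Qed.
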